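(* Let $X$ be a compact metric space and $f\colon X\to X$ continuous. If $(X,f)$ has two-sided cofinal orbital shadowing, then it has property $P_a$.
   Context: $d_H$ is the Hausdorff metric. A full trajectory is $\langle z_i\rangle_{i\in\mathbb Z}$ with $f(z_i)=z_{i+1}$. For two-sided sequences, $\omega(\langle x_i\rangle)=\bigcap_{M}\overline{\{x_n:n>M\}}$, $\alpha(\langle x_i\rangle)=\bigcap_{M}\overline{\{x_n:n<-M\}}$. $ICT_f$ is the set of nonempty closed internally chain transitive sets ($A$ is internally chain transitive if for all $a,b\in A$ and $\delta>0$ there exist $x_0=a,\dots,x_N=b$ in $A$, $N\ge1$, with $d(f(x_i),x_{i+1})<\delta$). Property $P_a$: for every $A\in ICT_f$ and $\epsilon>0$ there is a full trajectory $\langle x_i\rangle$ with $d_H(\alpha(\langle x_i\rangle),A)<\epsilon$ and $d_H(\omega(\langle x_i\rangle),A)<\epsilon$. A two-sided $\delta$-pseudo-orbit is $\langle x_i\rangle_{i\in\mathbb Z}$ with $d(f(x_i),x_{i+1})<\delta$ for all $i$. Two-sided cofinal orbital shadowing: for every $\epsilon>0$ there is $\delta>0$ such that for every two-sided $\delta$-pseudo-orbit $\langle x_i\rangle$ there is a full trajectory $\langle z_i\rangle$ such that for every $K\in\mathbb N$ there is $N\ge K$ with $d_H(\overline{\{z_{N+i}\}_{i\ge0}},\overline{\{x_{N+i}\}_{i\ge0}})<\epsilon$ and $d_H(\overline{\{z_{i-N}\}_{i\le0}},\overline{\{x_{i-N}\}_{i\le0}})<\epsilon$. *)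

From HB Require Import structures.
From mathcomp Require Import all_boot all_order all_algebra.
From mathcomp Require Import all_classical all_reals all_analysis.
Set Implicit Arguments. Unset Strict Implicit. Unset Printing Implicit Defensive.
Import Order.TTheory GRing.Theory Num.Theory.
Local Open Scope classical_set_scope.
Local Open Scope ring_scope.

Section Dyn.
Context {R : realType} {X : metricType R}.

Definition pdist (x : X) (A : set X) : \bar R :=
  ereal_inf [set (mdist x a)%:E | a in A].

Definition hausdorff_dist (A B : set X) : \bar R :=
  Order.max (ereal_sup [set pdist a B | a in A])
            (ereal_sup [set pdist b A | b in B]).

Definition full_trajectory (f : X -> X) (z : int -> X) : Prop :=
  forall i : int, f (z i) = z (i + 1).

Definition pseudo_orbit2 (f : X -> X) (delta : R) (x : int -> X) : Prop :=
  forall i : int, mdist (f (x i)) (x (i + 1)) < delta.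

Definition omega_lim (x : int -> X) : set X :=
  [set y | forall M : int, closure [set x n | n in [set n : int | M < n]] y].

Definition alpha_lim (x : int -> X) : set X :=
  [set y | forall M : int, closure [set x n | n in [set n : int | n < - M]] y].

Definition internally_chain_transitive (f : X -> X) (A : set X) : Prop :=
  forall a b, A a -> A b -> forall delta : R, 0 < delta ->
    exists (N : nat) (y : nat -> X),
      (1 <= N)%N /\ y 0%N = a /\ y N = b /\
      (forall i, (i <= N)%N -> A (y i)) /\
      (forall i, (i < N)%N -> mdist (f (y i)) (y i.+1) < delta).

Definition ICT (f : X -> X) (A : set X) : Prop :=
  closed A /\ A !=set0 /\ internally_chain_transitive f A.

Definition property_Pa (f : X -> X) : Prop :=
  forall A, ICT f A -> forall eps : R, 0 < eps ->
    exists x : int -> X, full_trajectory f x /\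
      (hausdorff_dist (alpha_lim x) A < eps%:E)%E /\
      (hausdorff_dist (omega_lim x) A < eps%:E)%E.

Definition two_sided_cofinal_orbital_shadowing (f : X -> X) : Prop :=
  forall eps : R, 0 < eps -> exists delta : R, 0 < delta /\
    forall x : int -> X, pseudo_orbit2 f delta x ->
    exists z : int -> X, full_trajectory f z /\
      forall K : nat, exists N : nat, (K <= N)%N /\
        (hausdorff_dist (closure [set z (N%:Z + i)%R | i in [set i : int | (0 <= i)%R]])
                        (closure [set x (N%:Z + i)%R | i in [set i : int | (0 <= i)%R]])
           < eps%:E)%E /\
        (hausdorff_dist (closure [set z (i - N%:Z)%R | i in [set i : int | (i <= 0)%R]])
                        (closure [set x (i - N%:Z)%R | i in [set i : int | (i <= 0)%R]])
           < eps%:E)%E.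

End Dyn.

From HB Require Import structures.
From mathcomp Require Import all_boot all_order all_algebra.
From mathcomp Require Import all_classical all_reals all_analysis.
From mathcomp Require Import zify ring lra.
Set Implicit Arguments. Unset Strict Implicit. Unset Printing Implicit Defensive.
Import Order.TTheory GRing.Theory Num.Theory.
Local Open Scope classical_set_scope.
Local Open Scope ring_scope.

(* Fix A in ICT_f and eps > 0, and let delta be given by shadowing for eps/4.
   Take a finite eps/4-net of A and, by internal chain transitivity, a closed
   delta-chain in A through all net points.  Repeating it periodically gives a
   two-sided delta-pseudo-orbit x in A each of whose forward and backward tails
   contains the whole net.  Let z shadow x.  Every point of omega(z) lies in the
   closure of a tail of z, hence near the closure of a tail of x, hence near A.
   Conversely every point of A is near a net point b, and z comes close to b at
   arbitrarily late times, so by compactness some point of omega(z) is near b.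
   Reversing time gives the same for alpha(z). *)

Section Metric.
Context {R : realType} {X : metricType R}.
Implicit Types (A B S : set X) (a b : X).

Lemma hausdorff_dist_lt A B (e : \bar R) : (hausdorff_dist A B < e)%E ->
  (forall a, A a -> pdist a B < e)%E /\ (forall b, B b -> pdist b A < e)%E.
Proof.
rewrite /hausdorff_dist gt_max => /andP[AB BA].
by split=> a Aa; [apply: le_lt_trans AB | apply: le_lt_trans BA];
  apply: ereal_sup_ubound; exists a.
Qed.

Lemma pdist_lt a B (e : R) : (pdist a B < e%:E)%E -> exists2 b, B b & mdist a b < e.
Proof. by move=> /ereal_inf_lt[_ [b Bb <-]]; rewrite lte_fin; exists b. Qed.

Lemma pdist_le_mdist a {B b} : B b -> (pdist a B <= (mdist a b)%:E)%E.
Proof. by move=> Bb; apply: ereal_inf_lbound; exists b. Qed.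

Lemma hausdorff_dist_le A B (r : R) :
  (forall a, A a -> exists2 b, B b & mdist a b <= r) ->
  (forall b, B b -> exists2 a, A a & mdist b a <= r) ->
  (hausdorff_dist A B <= r%:E)%E.
Proof.
move=> AB BA; rewrite /hausdorff_dist ge_max; apply/andP; split.
- apply: ge_ereal_sup => _ [a /AB[b Bb ab] <-].
  by apply: le_trans (pdist_le_mdist a Bb) _.
- apply: ge_ereal_sup => _ [b /BA[a Aa ba] <-].
  by apply: le_trans (pdist_le_mdist b Aa) _.
Qed.

Lemma closure_mdist_lt S a (e : R) : closure S a -> 0 < e ->
  exists2 b, S b & mdist a b < e.
Proof.
move=> Sa e0; have [b [Sb]] := Sa _ (nbhsx_ballx a e e0).
by rewrite ballEmdist; exists b.
Qed.

Lemma compact_finite_net A (e : R) : compact A -> 0 < e ->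
  exists2 s : seq X, (forall b, b \in s -> A b) &
    forall a, A a -> exists2 b, b \in s & mdist a b < e.
Proof.
move=> cA e0; apply: contrapT => no_net.
pose inA (s : seq X) := forall b, b \in s -> A b.
pose uncovered (s : seq X) := A `\` [set a | exists2 b, b \in s & mdist a b < e].
have uncoveredN0 s : inA s -> uncovered s !=set0.
  move=> sA; apply: contrapT => s0; apply: no_net; exists s => // a Aa.
  by apply: contrapT => aN; apply: s0; exists a.
pose F := filter_from inA uncovered.
have FF : Filter F.
  apply: filter_from_filter; first by exists [::].
  move=> s t sA tA; exists (s ++ t) => [b|a [Aa aN]].
    by rewrite mem_cat => /orP[/sA|/tA].
  by split; split=> // -[b bst ab]; apply: aN; exists b; rewrite // mem_cat bst ?orbT.
have [|p [Ap clp]] := cA F (filter_from_proper FF uncoveredN0).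
  by exists [::] => // a [].
have pA : inA [:: p] by move=> b; rewrite inE => /eqP ->.
have Fp : F (uncovered [:: p]) by exists [:: p].
have [a [[_ aN] pa]] := clp _ _ Fp (nbhsx_ballx p e e0).
apply: aN; exists p; first by rewrite inE.
by move: pa; rewrite ballEmdist /= metric_sym.
Qed.

End Metric.

Section Chains.
Context {R : realType} {X : metricType R}.
Variables (f : X -> X) (A : set X) (delta : R).

Definition chain (N : nat) (y : nat -> X) : Prop :=
  (forall i, (i <= N)%N -> A (y i)) /\
  (forall i, (i < N)%N -> mdist (f (y i)) (y i.+1) < delta).

Definition cat_chain (N1 : nat) (y1 y2 : nat -> X) (i : nat) : X :=
  if (i <= N1)%N then y1 i else y2 (i - N1)%N.

Lemma cat_chainl N1 y1 y2 i : (i <= N1)%N -> cat_chain N1 y1 y2 i = y1 i.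
Proof. by rewrite /cat_chain => ->. Qed.

Lemma cat_chainr N1 y1 y2 j : y1 N1 = y2 0%N -> cat_chain N1 y1 y2 (N1 + j) = y2 j.
Proof.
rewrite /cat_chain => y12; case: ifPn => [|_]; last by rewrite addKn.
by rewrite -[X in (_ <= X)%N]addn0 leq_add2l leqn0 => /eqP->; rewrite addn0.
Qed.

Lemma chain_cat N1 N2 y1 y2 : y1 N1 = y2 0%N ->
  chain N1 y1 -> chain N2 y2 -> chain (N1 + N2) (cat_chain N1 y1 y2).
Proof.
move=> y12 [A1 step1] [A2 step2]; split=> i iN.
  have [iN1|/ltnW/subnKC iE] := leqP i N1; first by rewrite cat_chainl //; apply: A1.
  by rewrite -iE cat_chainr //; apply: A2; lia.
have [iN1|/subnKC iE] := ltnP i N1.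
  by rewrite cat_chainl 1?ltnW // cat_chainl //; apply: step1.
by rewrite -iE -addnS !cat_chainr //; apply: step2; lia.
Qed.

Lemma closed_chain_through a (s : seq X) :
  internally_chain_transitive f A -> 0 < delta -> A a ->
  (forall b, b \in s -> A b) ->
  exists N y, [/\ (0 < N)%N, y 0%N = a, y N = a, chain N y &
    forall b, b \in s -> exists2 i, (i < N)%N & y i = b].
Proof.
move=> ict delta0 Aa; elim: s => [_|b s IH sA].
  by have [N [y [N0 [y0 [yN ch]]]]] := ict a a Aa Aa delta delta0; exists N, y.
have [|N0 [y0 [N00 y00 y0N ch0 cov0]]] := IH.
  by move=> c cs; apply: sA; rewrite inE cs orbT.
have Ab : A b by apply: sA; rewrite inE eqxx.
have [N1 [y1 [N10 [y10 [y1N ch1]]]]] := ict a b Aa Ab delta delta0.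
have [N2 [y2 [N20 [y20 [y2N ch2]]]]] := ict b a Ab Aa delta delta0.
have y1y2 : y1 N1 = y2 0%N by rewrite y1N y20.
pose y12 := cat_chain N1 y1 y2.
have y12y0 : y12 (N1 + N2)%N = y0 0%N by rewrite /y12 cat_chainr // y2N y00.
exists (N1 + N2 + N0)%N, (cat_chain (N1 + N2) y12 y0); split.
- by rewrite addn_gt0 N00 orbT.
- by rewrite !cat_chainl.
- by rewrite cat_chainr.
- by apply: chain_cat => //; apply: chain_cat.
move=> c; rewrite inE => /predU1P[->|/cov0[i iN0 <-]].
  by exists N1; [lia | rewrite cat_chainl ?leq_addr // /y12 cat_chainl].
by exists (N1 + N2 + i)%N; rewrite ?ltn_add2l // cat_chainr.
Qed.

End Chains.

Section Tails.
Context {T : Type}.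

Definition fwd_tail (x : int -> T) (N : int) : set T :=
  [set x (N + i) | i in [set i : int | 0 <= i]].

Definition bwd_tail (x : int -> T) (N : int) : set T :=
  [set x (i - N) | i in [set i : int | i <= 0]].

Lemma bwd_tail_reverse (x : int -> T) (N : int) :
  bwd_tail x N = fwd_tail (fun n => x (- n)) N.
Proof.
by apply/seteqP; split=> _ [i /= i0 <-]; exists (- i);
  rewrite /= ?opprK ?oppr_ge0 ?oppr_le0 // opprD ?opprK addrC.
Qed.

End Tails.

Section Periodic.
Variables (T : Type) (N : nat) (y : nat -> T).
Hypotheses (N0 : (0 < N)%N) (yN : y N = y 0%N).

Definition periodic_ext (n : int) : T := y `|(n %% N%:Z)%Z|%N.

Lemma periodic_extE (k : nat) (t : int) : (k <= N)%N ->
  periodic_ext (k%:Z + t * N%:Z) = y k.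
Proof.
rewrite /periodic_ext addrC modzMDl leq_eqVlt => /predU1P[->|kN].
  by rewrite modzz.
by rewrite modz_small //; apply/andP; split; lia.
Qed.

Lemma periodic_ext_step (n : int) :
  exists2 k, (k < N)%N & periodic_ext n = y k /\ periodic_ext (n + 1) = y k.+1.
Proof.
have k0 : (0 <= n %% N%:Z)%Z by apply: modz_ge0; lia.
have kN : (n %% N%:Z < N%:Z)%Z by apply: ltz_pmod; lia.
set k := `|(n %% N%:Z)%Z|%N.
have nE : n = k%:Z + (n %/ N%:Z)%Z * N%:Z by rewrite gez0_abs // addrC -divz_eq.
exists k; first lia.
have n1E : n + 1 = k.+1%:Z + (n %/ N%:Z)%Z * N%:Z by rewrite {1}nE; lia.
by rewrite n1E {1}nE !periodic_extE //; lia.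
Qed.

Lemma periodic_ext_fwd_tail (k M : nat) : (k <= N)%N ->
  fwd_tail periodic_ext M%:Z (y k).
Proof.
move=> kN; exists (k%:Z - M%:Z + M%:Z * N%:Z); first by rewrite /=; nia.
have -> : M%:Z + (k%:Z - M%:Z + M%:Z * N%:Z) = k%:Z + M%:Z * N%:Z by ring.
exact: periodic_extE.
Qed.

Lemma periodic_ext_bwd_tail (k M : nat) : (k <= N)%N ->
  bwd_tail periodic_ext M%:Z (y k).
Proof.
move=> kN; exists (k%:Z + M%:Z - (M%:Z + 1) * N%:Z); first by rewrite /=; nia.
have -> : k%:Z + M%:Z - (M%:Z + 1) * N%:Z - M%:Z = k%:Z + (- (M%:Z + 1)) * N%:Z.
  by ring.
exact: periodic_extE.
Qed.

End Periodic.

Section OmegaLimit.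
Context {R : realType} {X : metricType R}.
Implicit Types (z : int -> X) (A : set X).

Lemma alpha_lim_reverse z : alpha_lim z = omega_lim (fun n => z (- n)).
Proof.
have tailE (M : int) : [set z n | n in [set n | n < - M]] =
                       [set z (- n) | n in [set n | M < n]].
  by apply/seteqP; split=> _ [n /= Mn <-]; exists (- n); rewrite /= ?opprK //; lia.
by apply/seteqP; split=> p pz M; [rewrite -tailE | rewrite tailE]; exact: pz.
Qed.

Lemma omega_lim_sub_fwd_tail z N : omega_lim z `<=` closure (fwd_tail z N).
Proof.
move=> p /(_ (N - 1)); apply: closureS => _ [n /= Nn <-].
by exists (n - N); rewrite /= ?subrKC //; lia.
Qed.

Lemma omega_lim_cluster z b (r : R) : compact [set: X] ->
  (forall M, exists2 n, M < n & mdist b (z n) < r) ->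
  exists2 p, omega_lim z p & mdist b p <= r.
Proof.
move=> cX zb.
pose late M := [set z n | n in [set n | M < n /\ mdist b (z n) < r]].
pose F := filter_from [set: int] late.
have FF : Filter F.
  apply: filter_from_filter; first by exists 0.
  move=> M M' _ _; exists (Num.max M M') => // _ [n [+ bn] <-].
  by rewrite gt_max => /andP[Mn M'n]; split; exists n.
have PF : ProperFilter F.
  by apply: filter_from_proper => M _; have [n Mn bn] := zb M; exists (z n), n.
have [p [_ Fp]] := cX F PF filterT.
have lateF M : F (late M) by exists M.
exists p => [M U pU|].
  have [_ [[n [Mn _] <-] Uzn]] := Fp _ U (lateF M) pU.
  by exists (z n); split => //; exists n.
rewrite leNgt; apply/negP => rbp.
have gap : 0 < mdist b p - r by rewrite subr_gt0.
have [_ [[n [_ bzn] <-] pzn]] := Fp _ _ (lateF 0) (nbhsx_ballx p _ gap).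
move: pzn; rewrite ballEmdist /=.
have := metric_triangle b (z n) p; rewrite (metric_sym (z n) p); lra.
Qed.

Lemma omega_lim_hausdorff_le z (T : nat -> set X) A (e : R) :
  compact [set: X] -> 0 < e -> closed A -> (forall N, T N `<=` A) ->
  (forall a, A a -> exists2 b, mdist a b < e & forall N, T N b) ->
  (forall K, exists N, (K <= N)%N /\
     (hausdorff_dist (closure (fwd_tail z N%:Z)) (closure (T N)) < e%:E)%E) ->
  (hausdorff_dist (omega_lim z) A <= (3 * e)%:E)%E.
Proof.
move=> cX e0 clA TA net shadow.
have clTA N : closure (T N) `<=` A by rewrite closureE; apply: smallest_sub.
apply: hausdorff_dist_le => [p zp|a Aa].
  have [N [_ /hausdorff_dist_lt[zT _]]] := shadow 0%N.
  have [c /clTA Ac pc] := pdist_lt (zT p (omega_lim_sub_fwd_tail N%:Z zp)).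
  by exists c => //; lra.
have [b ab Tb] := net a Aa.
have [M|p zp bp] := omega_lim_cluster (z := z) (b := b) (r := 2 * e) cX.
  have [N [MN /hausdorff_dist_lt[_ Tz]]] := shadow `|M|.+1.
  have [w /closure_mdist_lt/(_ e0)[_ [i /= i0 <-] wz] bw] :=
    pdist_lt (Tz b (subset_closure (Tb N))).
  exists (N%:Z + i); first lia.
  by have := metric_triangle b w (z (N%:Z + i)); lra.
by exists p => //; have := metric_triangle a b p; lra.
Qed.

End OmegaLimit.

Theorem mainTheorem7 (R : realType) (X : metricType R) (f : X -> X) :
  compact [set: X] -> continuous f ->
  two_sided_cofinal_orbital_shadowing f -> property_Pa f.
Proof.
move=> cX _ shadow A [clA [[a Aa] ict]] E E0.
pose e := E / 4; have e0 : 0 < e by rewrite divr_gt0.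
have [delta [delta0 shadow_delta]] := shadow e e0.
have [s sA snet] := compact_finite_net (subclosed_compact clA cX (@subsetT _ A)) e0.
have [N [y [N0 y0 yN [yA ystep] ycov]]] := closed_chain_through ict delta0 Aa sA.
have yN0 : y N = y 0%N by rewrite y0 yN.
pose x := periodic_ext N y.
have x_orbit : pseudo_orbit2 f delta x.
  move=> n; rewrite /x.
  by have [k kN [-> ->]] := periodic_ext_step N0 yN0 n; apply: ystep.
have [z [zf zx]] := shadow_delta x x_orbit.
exists z; split => //.
have xA n : A (x n).
  by rewrite /x; have [k /ltnW kN [-> _]] := periodic_ext_step N0 yN0 n; apply: yA.
have net a' : A a' -> exists2 b, mdist a' b < e &
    forall M : nat, fwd_tail x M%:Z b /\ bwd_tail x M%:Z b.
  move=> /snet[_ /ycov[k /ltnW kN <-] ab]; exists (y k) => // M.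
  by split; [apply: periodic_ext_fwd_tail | apply: periodic_ext_bwd_tail].
have e3E : ((3 * e)%:E < E%:E)%E by rewrite lte_fin /e; lra.
split; apply: le_lt_trans e3E.
- rewrite alpha_lim_reverse.
  apply: (omega_lim_hausdorff_le (T := fun M : nat => bwd_tail x M%:Z)) => //.
  + by move=> M _ [n _ <-]; apply: xA.
  + by move=> a' /net[b ab xb]; exists b => // M; case: (xb M).
  + by move=> K; have [M [KM [_ zxM]]] := zx K; exists M; rewrite -bwd_tail_reverse.
- apply: (omega_lim_hausdorff_le (T := fun M : nat => fwd_tail x M%:Z)) => //.
  + by move=> M _ [n _ <-]; apply: xA.
  + by move=> a' /net[b ab xb]; exists b => // M; case: (xb M).
  + by move=> K; have [M [KM [zxM _]]] := zx K; exists M.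
Qed.
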